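(* Let $(X,\|\cdot\|)$ be a normed linear space over $\mathbb{R}$ or $\mathbb{C}$, and let $a,x_1,\dots,x_n\in X\setminus\{0\}$ satisfy $\|a\|\ge\|x_j-a\|$ for each $j\in\{1,\dots,n\}$. Then for any $p_1,\dots,p_n\ge0$ with $\sum_{j=1}^n p_j=1$, $$\frac{\big\|\sum_{j=1}^n p_jx_j\big\|}{\sum_{j=1}^n p_j\|x_j\|}\ \ge\ \min_{1\le j\le n}\left\{\frac{\|a\|-\|x_j-a\|}{\|x_j\|}\right\}\ (\ge0).$$ The inequality is sharp: equality holds when $x_1=\dots=x_n=\varepsilon a$ for some $\varepsilon\in(0,1)$. *)

From HB Require Import structures.
From mathcomp Require Import all_boot all_order all_algebra.
From mathcomp Require Import all_classical all_reals normedtype.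
Set Implicit Arguments. Unset Strict Implicit. Unset Printing Implicit Defensive.
Import Order.TTheory GRing.Theory Num.Theory.
Import numFieldNormedType.Exports.
Local Open Scope ring_scope.

Definition minfam (K : numFieldType) (n : nat) (c : 'I_n.+1 -> K) : K :=
  \big[Num.min/c ord0]_(j < n.+1) c j.

From HB Require Import structures.
From mathcomp Require Import all_boot all_order all_algebra.
From mathcomp Require Import all_classical all_reals normedtype.
Import Order.TTheory GRing.Theory Num.Theory.
Import numFieldNormedType.Exports.
Set Implicit Arguments. Unset Strict Implicit. Unset Printing Implicit Defensive.
Local Open Scope ring_scope.

(* Since [\sum_j p j *: x j = a + \sum_j p j *: (x j - a)], the reverse triangle
   inequality bounds its norm below by [\sum_j p j * (`|a| - `|x j - a|)], that is
   by [\sum_j p j * c_j * `|x j|] with [c_j = (`|a| - `|x j - a|) / `|x j|], and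
   each [c_j] is at least their minimum. For [x j = eps *: a] every [c_j] and the
   ratio equal 1. *)

Section MinFamily.
Variables (K : numFieldType) (n : nat) (c : 'I_n.+1 -> K).

Lemma minfam_attained : exists j, minfam c = c j.
Proof.
rewrite /minfam; elim/big_ind: _ => [|_ _ [i ->] [k ->]|j _]; [by exists ord0| |by exists j].
by rewrite minElt; case: ifP; [exists i | exists k].
Qed.

Lemma minfam_le : (forall j, c j \is Num.real) -> forall j, minfam c <= c j.
Proof.
move=> cR j; rewrite /minfam; have: j \in index_enum 'I_n.+1 by rewrite mem_index_enum.
elim: (index_enum _) => // k r IHr; rewrite inE big_cons.
have minR : \big[Num.min/c ord0]_(i <- r) c i \is Num.real by exact: bigmin_real.
rewrite comparable_ge_min ?real_comparable //.
by case/predU1P => [->|/IHr ->]; rewrite ?lexx ?orbT.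
Qed.

End MinFamily.

Section ConvexCombination.
Variables (K : numFieldType) (X : normedModType K) (n : nat) (p : 'I_n.+1 -> K).
Hypotheses (p_ge0 : forall j, 0 <= p j) (p_sum1 : \sum_(j < n.+1) p j = 1).

Lemma convex_comb_const (k : K) : \sum_(j < n.+1) p j * k = k.
Proof. by rewrite -mulr_suml p_sum1 mul1r. Qed.

Lemma convex_combZ_const (v : X) : \sum_(j < n.+1) p j *: v = v.
Proof. by rewrite -scaler_suml p_sum1 scale1r. Qed.

Lemma convex_comb_gt0 (w : 'I_n.+1 -> K) :
  (forall j, 0 < w j) -> 0 < \sum_(j < n.+1) p j * w j.
Proof.
move=> w_gt0; have pw_ge0 j : true -> 0 <= p j * w j by move=> _; exact/mulr_ge0/ltW.
rewrite lt_def (sumr_ge0 _ pw_ge0) andbT.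
apply: contra_neq (@oner_neq0 K) => /(psumr_eq0P pw_ge0) pw0.
rewrite -p_sum1 big1 // => j _.
by have /eqP := pw0 j isT; rewrite mulf_eq0 (gt_eqF (w_gt0 j)) orbF => /eqP.
Qed.

Lemma norm_convex_comb_ge (a : X) (x : 'I_n.+1 -> X) :
  `|a| - \sum_(j < n.+1) p j * `|x j - a| <= `|\sum_(j < n.+1) p j *: x j|.
Proof.
have -> : \sum_(j < n.+1) p j *: x j = a + \sum_(j < n.+1) p j *: (x j - a).
  by under [X in _ = _ + X]eq_bigr => j _ do rewrite scalerBr;
     rewrite sumrB convex_combZ_const addrC subrK.
apply: le_trans (lerB_normD _ _); rewrite lerD2l lerN2.
apply: le_trans (ler_norm_sum _ _ _) _; apply: ler_sum => j _.
by rewrite normrZ ger0_norm.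
Qed.

Lemma convex_comb_norm_ratio_ge (m : K) (a : X) (x : 'I_n.+1 -> X) :
  (forall j, m * `|x j| <= `|a| - `|x j - a|) ->
  m * \sum_(j < n.+1) p j * `|x j| <= `|\sum_(j < n.+1) p j *: x j|.
Proof.
move=> mx_le; apply: le_trans (norm_convex_comb_ge a x).
rewrite -[`|a|]convex_comb_const -sumrB mulr_sumr; apply: ler_sum => j _.
by rewrite -mulrBr mulrCA ler_wpM2l.
Qed.

End ConvexCombination.

Lemma normr_scale_sub (K : numFieldType) (X : normedModType K) (eps : K) (a : X) :
  eps <= 1 -> `|eps *: a - a| = (1 - eps) * `|a|.
Proof.
move=> eps_le1; rewrite -[X in _ - X]scale1r -scalerBl -normrN -scaleNr opprB.
by rewrite normrZ ger0_norm ?subr_ge0.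
Qed.

Theorem theorem2p3 (K : numFieldType) (X : normedModType K) (n : nat)
    (a : X) (x : 'I_n.+1 -> X) (p : 'I_n.+1 -> K) :
  a != 0 -> (forall j, x j != 0) ->
  (forall j, `|x j - a| <= `|a|) ->
  (forall j, 0 <= p j) -> \sum_(j < n.+1) p j = 1 ->
  let m := minfam (fun j => (`|a| - `|x j - a|) / `|x j|) in
  let r := `|\sum_(j < n.+1) p j *: x j| / (\sum_(j < n.+1) p j * `|x j|) in
  [/\ m <= r, 0 <= m &
      forall eps : K, 0 < eps < 1 -> (forall j, x j = eps *: a) -> r = m].
Proof.
move=> a_neq0 x_neq0 xa_le p_ge0 p_sum1 m r.
set c := fun j => (`|a| - `|x j - a|) / `|x j|.
have c_ge0 j : 0 <= c j by rewrite divr_ge0 ?subr_ge0.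
have c_mul_norm j : c j * `|x j| = `|a| - `|x j - a| by rewrite divfK ?normr_eq0.
split.
- rewrite ler_pdivlMr ?convex_comb_gt0 // => [|j]; last by rewrite normr_gt0.
  apply: (convex_comb_norm_ratio_ge p_ge0 p_sum1 (a := a)) => j; rewrite -c_mul_norm ler_wpM2r //.
  by apply: minfam_le => i; apply: ger0_real (c_ge0 i).
- by rewrite /m; have [j ->] := minfam_attained c.
- move=> eps /andP[eps_gt0 eps_lt1] x_eps.
  have c1 j : c j = 1.
    rewrite /c x_eps normr_scale_sub ?ltW // normrZ gtr0_norm //.
    by rewrite -{1}[`|a|]mul1r -mulrBl subKr divff // mulf_neq0 ?gt_eqF ?normr_gt0.
  rewrite /m; have [i ->] := minfam_attained c; rewrite c1 /r.
  under eq_bigr => j _ do rewrite x_eps.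
  under [X in _ / X]eq_bigr => j _ do rewrite x_eps.
  by rewrite convex_combZ_const // convex_comb_const // divff // normr_eq0 scaler_eq0 negb_or gt_eqF.
Qed.
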